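(* For every integer $n>7$, $F_n\ge 3$.
   Context: Define maps $G,S:\mathbb Z^2\to\mathbb Z^2$ by $G(x,y)=(x+y,y)$ and $S(x,y)=(3x-2y+1,\,2x-y+1)$. Define the array $(F_{n,k})_{n,k\ge 0}$ by $F_{0,0}=1$ and, for $(n,k)\neq(0,0)$, $F_{n,k}$ is the number of finite words $w=w_1w_2\cdots w_m$ ($m\ge 0$) over the alphabet $\{G,S\}$ with $w_1\circ w_2\circ\cdots\circ w_m(1,1)=(n,k)$ (the empty word acts as the identity). Equivalently: start with all entries $0$, set $F_{0,0}=1$ and $F_{1,1}=1$, and thereafter, whenever an entry $F_{n,k}$ with $n\ge 1$ changes its value, increase $F_{n+k,k}$ and $F_{3n+1-2k,\,2n+1-k}$ by $1$. Set $F_n=\sum_{k\ge0}F_{n,k}$ (a finite sum since $F_{n,k}=0$ for $k>n$). *)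

From mathcomp Require Import all_boot all_order all_algebra.
From mathcomp Require Import zify.
Set Implicit Arguments. Unset Strict Implicit. Unset Printing Implicit Defensive.
Import Order.TTheory GRing.Theory Num.Theory.
Local Open Scope ring_scope.

Definition Gmap (p : int * int) : int * int := (p.1 + p.2, p.2).
Definition Smap (p : int * int) : int * int :=
  (3 * p.1 - 2 * p.2 + 1, 2 * p.1 - p.2 + 1).

Definition letter (b : bool) : int * int -> int * int :=
  if b then Gmap else Smap.

Fixpoint act (w : seq bool) : int * int :=
  if w is b :: w' then letter b (act w') else (1, 1).

Definition nwords (m n k : nat) : nat :=
  #|[pred t : m.-tuple bool | act t == (n%:Z, k%:Z)]|%N.

(* Words reaching (n,k) have length < n (lemma act_size_bound below),
   so summing over lengths m <= n counts all of them. *)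
Definition F (n k : nat) : nat :=
  if (n == 0%N) && (k == 0%N) then 1%N else (\sum_(m < n.+1) nwords m n k)%N.

(* F_n = sum_k F_{n,k}; F_{n,k} = 0 for k > n (lemma act_snd_bound). *)
Definition Frow (n : nat) : nat := (\sum_(k < n.+1) F n k)%N.

Lemma act_inv (w : seq bool) :
  (size w)%:Z + 1 <= (act w).1 /\ 1 <= (act w).2 /\ (act w).2 <= (act w).1.
Proof.
elim: w => [|b w [h1 [h2 h3]]] /=; first by [].
case: b; rewrite /letter /Gmap /Smap /=; lia.
Qed.

Lemma act_size_bound (w : seq bool) (n k : nat) :
  act w = (n%:Z, k%:Z) -> (size w < n)%N /\ (k <= n)%N.
Proof.
move=> e; have [h1 [h2 h3]] := act_inv w; rewrite e /= in h1 h2 h3; lia.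
Qed.

(* Columns 1 and n of row n are always reached, by G^(n-1) and S^(n-1), so it
   suffices to reach some (n, k) with 1 < k < n.  The words G S^j, G G S^j,
   S G^j and S G S^j cover n even, n = 0, 2 (mod 3) and n = 1 (mod 4); what is
   left is n = 7 (mod 12), handled by G G S^j G for n = 31 (mod 36), by
   G^5 S^j G for n = 7 (mod 36) and by G S G G S^j G for n = 19 (mod 36). *)
From mathcomp Require Import all_boot all_order all_algebra.
From mathcomp Require Import zify ring.
Import Order.TTheory GRing.Theory Num.Theory.
Local Open Scope ring_scope.

Lemma act_nseq_cat (b : bool) j w :
  act (nseq j b ++ w) = iter j (letter b) (act w).
Proof. by elim: j => //= j ->. Qed.

Lemma act_nseq (b : bool) j : act (nseq j b) = iter j (letter b) (1, 1).
Proof. by rewrite -[nseq j b]cats0 act_nseq_cat. Qed.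

Lemma iter_Gmap j p : iter j Gmap p = (p.1 + j%:Z * p.2, p.2).
Proof.
elim: j => [|j /= ->]; first by rewrite mul0r addr0; case: p.
by rewrite /Gmap /=; congr pair; rewrite intS; ring.
Qed.

Lemma iter_Smap j p :
  iter j Smap p = (p.1 + j%:Z * (2 * (p.1 - p.2) + 1),
                   p.2 + j%:Z * (2 * (p.1 - p.2) + 1)).
Proof.
elim: j => [|j /= ->]; first by rewrite !mul0r !addr0; case: p.
by rewrite /Smap /=; congr pair; rewrite intS; ring.
Qed.

Lemma act_F_gt0 (w : seq bool) (n k : nat) :
  act w = (n%:Z, k%:Z) -> (0 < F n k)%N.
Proof.
move=> act_w; have [size_w _] := act_size_bound act_w.
rewrite /F; case: ifP => // _.
have size_w' : (size w < n.+1)%N by apply: ltnW.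
rewrite (bigD1 (Ordinal size_w')) //= ltn_addr //.
by apply/card_gt0P; exists (in_tuple w); rewrite inE /= act_w.
Qed.

Lemma sum_ge3_of_three_pos (f : nat -> nat) N a b c :
  (a < b < c)%N -> (c < N)%N -> (0 < f a)%N -> (0 < f b)%N -> (0 < f c)%N ->
  (3 <= \sum_(i < N) f i)%N.
Proof.
move=> /andP[ab bc] cN fa fb fc.
have aN : (a < N)%N by lia.
have bN : (b < N)%N by lia.
rewrite (bigD1 (Ordinal aN)) //= (bigD1 (Ordinal bN)) /=; last first.
  by rewrite -val_eqE /=; lia.
rewrite (bigD1 (Ordinal cN)) /=; last by rewrite -!val_eqE /=; lia.
lia.
Qed.

Lemma Frow_ge3_of_inner_column n k (w : seq bool) :
  (1 < k < n)%N -> act w = (n%:Z, k%:Z) -> (3 <= Frow n)%N.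
Proof.
move=> k_inner act_w.
apply: (@sum_ge3_of_three_pos (F n) n.+1 1 k n) => //.
- apply: (@act_F_gt0 (nseq n.-1 true)).
  by rewrite act_nseq iter_Gmap /=; congr pair; lia.
- exact: act_F_gt0 act_w.
- apply: (@act_F_gt0 (nseq n.-1 false)).
  by rewrite act_nseq iter_Smap /=; congr pair; lia.
Qed.

Ltac compute_act :=
  rewrite /= ?act_nseq_cat ?act_nseq /= ?iter_Gmap ?iter_Smap /Gmap /Smap /=;
  congr pair; lia.

Lemma inner_column_reached n : (7 < n)%N ->
  exists k (w : seq bool), (1 < k < n)%N /\ act w = (n%:Z, k%:Z).
Proof.
move=> n_gt7.
have [n_even | n_odd] := boolP (n %% 2 == 0)%N.
  exists (n %/ 2)%N, (true :: nseq (n %/ 2)%N.-1 false).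
  by split; [lia | compute_act].
have [n_0mod3 | n_not0mod3] := boolP (n %% 3 == 0)%N.
  exists (n %/ 3)%N, [:: true, true & nseq (n %/ 3)%N.-1 false].
  by split; [lia | compute_act].
have [n_2mod3 | n_1mod3] := boolP (n %% 3 == 2)%N.
  exists (2 * (n %/ 3) + 2)%N, (false :: nseq (n %/ 3)%N true).
  by split; [lia | compute_act].
have [n_1mod4 | n_3mod4] := boolP (n %% 4 == 1)%N.
  exists (3 * (n %/ 4) + 1)%N, [:: false, true & nseq (n %/ 4)%N.-1 false].
  by split; [lia | compute_act].
have [n_4mod9 | n_not4mod9] := boolP (n %% 9 == 4)%N.
  exists (3 * (n %/ 9) + 1)%N, [:: true, true & nseq (n %/ 9)%N false ++ [:: true]].
  by split; [lia | compute_act].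
have [n_7mod18 | n_not7mod18] := boolP (n %% 18 == 7)%N.
  exists (3 * (n %/ 18) + 1)%N, (nseq 5 true ++ nseq (n %/ 18)%N false ++ [:: true]).
  by split; [lia | compute_act].
exists (15 * (n %/ 36) + 8)%N,
  [:: true, false, true, true & nseq (n %/ 36)%N false ++ [:: true]].
by split; [lia | compute_act].
Qed.

Theorem theorem12 (n : nat) : (7 < n)%N -> (3 <= Frow n)%N.
Proof.
move=> /inner_column_reached [k [w [k_inner act_w]]].
exact: Frow_ge3_of_inner_column k_inner act_w.
Qed.
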